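(* Let $K\subset\mathbb{R}$ be compact and $f:\mathbb{R}\to\mathbb{R}_+$ a continuous nonnegative function supported in $K$ with $f'\in C^\star_K$. Let $$u_2(x)=\frac{1}{4\pi}\int_{\mathbb{R}}\log\Big(\frac{y^2+(f(x+y)-f(x))^2}{y^2+(f(x+y)+f(x))^2}\Big)dy.$$ Then there are a constant $C$ depending only on $K$ and bounded functions $U,R$ such that for all $x\in\mathbb{R}$ $$u_2(x)=f(x)U(x)=-f(x)\big(1+R(x)\big),$$ with $\|U\|_{L^\infty}\le C\big(1+\|f'\|_D^6\big)$ and $\|R\|_{L^\infty}\le C\|f'\|_D\big(1+\|f'\|_{L^\infty}^5\big)$.
   Context: $\omega_h(r)=\sup_{|x-y|\le r}|h(x)-h(y)|$; $\|h\|_D=\int_0^1\frac{\omega_h(r)}{r}dr$; $C^\star_K$ is the space of bounded continuous functions supported in $K$ with $\|h\|_D<\infty$. *)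

From Stdlib Require Export Reals Rtopology.
Open Scope R_scope.

Definition modulus_at (h : R -> R) (r w : R) : Prop :=
  is_lub (fun v => exists x y, Rabs (x - y) <= r /\ v = Rabs (h x - h y)) w.

Definition sup_norm (h : R -> R) (M : R) : Prop :=
  is_lub (fun v => exists x, v = Rabs (h x)) M.

Definition improper_int_01 (g : R -> R) (L : R) : Prop :=
  (forall a, 0 < a <= 1 -> inhabited (Riemann_integrable g a 1)) /\
  forall eta, 0 < eta -> exists delta, 0 < delta /\
    forall a (Ha : 0 < a < delta) (Ha1 : a <= 1) (p : Riemann_integrable g a 1),
      Rabs (RiemannInt p - L) < eta.

Definition dini_norm (h : R -> R) (D : R) : Prop :=
  exists w : R -> R,
    (forall r, 0 < r <= 1 -> modulus_at h r (w r)) /\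
    improper_int_01 (fun r => w r / r) D.

Definition improper_int_pos (g : R -> R) (L : R) : Prop :=
  (forall a b, 0 < a -> a <= b -> inhabited (Riemann_integrable g a b)) /\
  forall eta, 0 < eta -> exists delta N, 0 < delta /\
    forall a b (Ha : 0 < a < delta) (Hb : N < b) (Hab : a <= b)
      (p : Riemann_integrable g a b),
      Rabs (RiemannInt p - L) < eta.

(* Improper integral over R (possible singularity only at 0 and at infinity):
   sum of the improper integrals over (0,+oo) and (-oo,0). *)
Definition improper_int_R (g : R -> R) (L : R) : Prop :=
  exists L1 L2, improper_int_pos g L1 /\ improper_int_pos (fun y => g (- y)) L2
                /\ L = L1 + L2.

Definition u2_integrand (f : R -> R) (x y : R) : R :=
  / (4 * PI) *
  ln ((y ^ 2 + (f (x + y) - f x) ^ 2) / (y ^ 2 + (f (x + y) + f x) ^ 2)).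

Definition in_Cstar (K : R -> Prop) (h : R -> R) : Prop :=
  (exists B, forall x, Rabs (h x) <= B) /\ continuity h /\
  (forall x, ~ K x -> h x = 0) /\ (exists D, dini_norm h D).

From Stdlib Require Import Reals Rtopology.
From Stdlib Require Import Lra Psatz ZArith Classical FunctionalExtensionality.
From Coquelicot Require Import Coquelicot.
Open Scope R_scope.

(* Fix [x] with [a = f x > 0] and write [g y = f (x + y)], [N = y^2 + (g y - a)^2],
   [D = y^2 + (g y + a)^2].  Integrating [log (N / D)] by parts against [y] gives
   [int_0^oo log (N / D) = - 2 pi a + 2 int_0^oo g' (atan ((g - a) / y) - atan ((g + a) / y))],
   so each half-line contributes [- a / 2] to [u_2 (x)] plus a remainder, and [U = -(1 + R)].
   On [(0, 1]] the derivatives and difference quotients of the two half-lines are within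
   [omega_{f'} (y)] of [+- f' x]; pairing the two remainders, what is left is a symmetric
   second difference of [atan], quadratic in the step [2 a / y].  This bounds the remainders by
   [a (C ||f'||_D + C ||f'||_oo (1 + ||f'||_oo))], and [||f'||_oo <= C_K ||f'||_D] since [f']
   vanishes off the compact [K]. *)

Lemma Rabs_increment_le (k k' : R -> R) (a b B : R) :
  a <= b -> (forall c, a <= c <= b -> is_derive k c (k' c)) ->
  (forall c, a <= c <= b -> Rabs (k' c) <= B) ->
  Rabs (k b - k a) <= B * (b - a).
Proof.
  intros Hab Hd HB. destruct (Req_dec a b) as [->|Hne].
  - rewrite !Rminus_diag, Rabs_R0, Rmult_0_r; lra.
  - destruct (MVT_cor2 k k' a b) as [c [-> Hc]]; [lra| |].
    + intros c Hc; apply is_derive_Reals, Hd; exact Hc.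
    + rewrite Rabs_mult, (Rabs_right (b - a)) by lra.
      apply Rmult_le_compat_r; [lra|]. apply HB; lra.
Qed.

Lemma inv_1_sqr_le_1 c : 0 <= / (1 + c ^ 2) <= 1.
Proof.
  assert (0 <= c ^ 2) by apply pow2_ge_0.
  split; [apply Rlt_le, Rinv_0_lt_compat; lra|].
  rewrite <- Rinv_1 at 2. apply Rinv_le_contravar; lra.
Qed.

Lemma atan_lipschitz u v : Rabs (atan u - atan v) <= Rabs (u - v).
Proof.
  assert (Hle : forall u v, v <= u -> Rabs (atan u - atan v) <= Rabs (u - v)).
  { clear u v. intros u v Hvu.
    rewrite (Rabs_right (u - v)) by lra. rewrite <- (Rmult_1_l (u - v)).
    apply (Rabs_increment_le atan (fun x => / (1 + x ^ 2))); [lra| |].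
    - intros; apply is_derive_Reals, derivable_pt_lim_atan.
    - intros c _. rewrite Rabs_right; [|apply Rle_ge]; apply inv_1_sqr_le_1. }
  destruct (Rle_dec v u); [auto|].
  rewrite Rabs_minus_sym, (Rabs_minus_sym u). apply Hle; lra.
Qed.

Lemma inv_1_sqr_lipschitz A B : Rabs (/ (1 + A ^ 2) - / (1 + B ^ 2)) <= Rabs (A - B).
Proof.
  assert (HA : 0 < 1 + A ^ 2) by nra. assert (HB : 0 < 1 + B ^ 2) by nra.
  replace (/ (1 + A ^ 2) - / (1 + B ^ 2))
    with ((B - A) * ((B + A) / ((1 + A ^ 2) * (1 + B ^ 2)))) by (field; lra).
  rewrite Rabs_mult, Rabs_minus_sym.
  rewrite <- (Rmult_1_r (Rabs (A - B))) at 2.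
  apply Rmult_le_compat_l; [apply Rabs_pos|].
  unfold Rdiv; rewrite Rabs_mult, (Rabs_right (/ _))
    by (apply Rle_ge, Rlt_le, Rinv_0_lt_compat; nra).
  apply (Rmult_le_reg_r ((1 + A ^ 2) * (1 + B ^ 2))); [nra|].
  rewrite Rmult_assoc, Rinv_l, Rmult_1_r, Rmult_1_l by nra.
  assert (0 <= A ^ 2 * B ^ 2) by (apply Rmult_le_pos; nra).
  assert (0 <= (A - 1) ^ 2) by apply pow2_ge_0. assert (0 <= (B - 1) ^ 2) by apply pow2_ge_0.
  assert (0 <= (A + 1) ^ 2) by apply pow2_ge_0. assert (0 <= (B + 1) ^ 2) by apply pow2_ge_0.
  destruct (Rcase_abs (B + A)); [rewrite Rabs_left | rewrite Rabs_right]; nra.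
Qed.

Lemma atan_nonneg t : 0 <= t -> 0 <= atan t.
Proof.
  intros Ht. destruct (Req_dec t 0) as [->|Hn]; [rewrite atan_0; lra|].
  rewrite <- atan_0. left. apply atan_increasing. lra.
Qed.

Lemma atan_compl_bounds z : 0 < z -> 0 <= PI / 2 - atan z <= / z.
Proof.
  intros Hz. rewrite <- atan_inv by exact Hz.
  assert (Hi : 0 < / z) by (apply Rinv_0_lt_compat; lra).
  split; [apply atan_nonneg; lra|].
  assert (L := atan_lipschitz (/ z) 0). rewrite atan_0, !Rminus_0_r in L.
  rewrite (Rabs_right (/ z)) in L by lra. apply Rabs_le_between in L. lra.
Qed.

Lemma atan_increment_lipschitz u v s : 0 <= s ->
  Rabs ((atan u - atan (u + s)) - (atan v - atan (v + s))) <= s * Rabs (u - v).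
Proof.
  intros Hs.
  assert (M := Rabs_increment_le (fun t => atan (u + t) - atan (v + t))
     (fun t => / (1 + (u + t) ^ 2) - / (1 + (v + t) ^ 2)) 0 s (Rabs (u - v)) Hs).
  simpl in M. rewrite !Rplus_0_r, Rminus_0_r in M.
  replace ((atan u - atan (u + s)) - (atan v - atan (v + s)))
    with (- (atan (u + s) - atan (v + s) - (atan u - atan v))) by ring.
  rewrite Rabs_Ropp, Rmult_comm. apply M.
  - intros c _. auto_derive; [trivial|]. simpl; ring.
  - intros c _. eapply Rle_trans; [apply inv_1_sqr_lipschitz|]. right; f_equal; ring.
Qed.

Lemma atan_symmetric_increment_bound b s : 0 <= s ->
  Rabs (2 * atan b - atan (b + s) + atan (s - b)) <= 4 * Rabs b * s ^ 2.
Proof.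
  intros Hs.
  assert (M := Rabs_increment_le (fun t => - atan (b + t) + atan (t - b))
     (fun t => - / (1 + (b + t) ^ 2) + / (1 + (t - b) ^ 2)) 0 s (4 * Rabs b * s) Hs).
  cbv beta in M. rewrite Rplus_0_r, Rminus_0_r, Rminus_0_l, atan_opp in M.
  replace (2 * atan b - atan (b + s) + atan (s - b))
    with (- atan (b + s) + atan (s - b) - (- atan b + - atan b)) by ring.
  replace (4 * Rabs b * s ^ 2) with (4 * Rabs b * s * s) by ring. apply M.
  - intros c _. auto_derive; [trivial|]. unfold Rminus; simpl; ring.
  - intros c Hc.
    assert (H1 : 0 < 1 + (b + c) ^ 2) by (pose proof (pow2_ge_0 (b + c)); lra).
    assert (H2 : 0 < 1 + (c - b) ^ 2) by (pose proof (pow2_ge_0 (c - b)); lra).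
    replace (- / (1 + (b + c) ^ 2) + / (1 + (c - b) ^ 2))
      with ((4 * b * c) * / ((1 + (b + c) ^ 2) * (1 + (c - b) ^ 2))) by (field; lra).
    rewrite !Rabs_mult, (Rabs_right (/ _))
      by (apply Rle_ge, Rlt_le, Rinv_0_lt_compat, Rmult_lt_0_compat; lra).
    rewrite (Rabs_right 4), (Rabs_right c) by lra.
    rewrite <- (Rmult_1_r (4 * Rabs b * s)).
    assert (0 <= Rabs b) by apply Rabs_pos.
    apply Rmult_le_compat; try nra.
    + apply Rlt_le, Rinv_0_lt_compat, Rmult_lt_0_compat; lra.
    + rewrite <- Rinv_1. apply Rinv_le_contravar; [lra|].
      assert (0 <= (b + c) ^ 2) by apply pow2_ge_0.
      assert (0 <= (c - b) ^ 2) by apply pow2_ge_0. nra.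
Qed.

Definition log_ratio (g : R -> R) (a y : R) : R :=
  ln ((y ^ 2 + (g y - a) ^ 2) / (y ^ 2 + (g y + a) ^ 2)).

Definition u2_kernel (g : R -> R) (a y : R) : R := / (4 * PI) * log_ratio g a y.

Definition atan_gap (g : R -> R) (a y : R) : R := atan ((g y - a) / y) - atan ((g y + a) / y).

Definition kernel_primitive (g : R -> R) (a y : R) : R :=
  y * log_ratio g a y + 2 * (g y - a) * (PI / 2 - atan ((g y - a) / y))
  - 2 * (g y + a) * (PI / 2 - atan ((g y + a) / y)).

(* For [y <= 0] the value is the limit at [0+], which makes it continuous on [[0, +oo)]. *)
Definition gap_weight (g p : R -> R) (a y : R) : R :=
  if Rlt_dec 0 y then p y * atan_gap g a y else p 0 * (atan (p 0) - PI / 2).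

Lemma atan_gap_bound g a y : Rabs (atan_gap g a y) <= PI.
Proof.
  unfold atan_gap. pose proof (atan_bound ((g y - a) / y)).
  pose proof (atan_bound ((g y + a) / y)). apply Rabs_le; lra.
Qed.

Lemma atan_gap_le g a y : 0 < a -> 0 < y -> Rabs (atan_gap g a y) <= 2 * a / y.
Proof.
  intros Ha Hy. unfold atan_gap. eapply Rle_trans; [apply atan_lipschitz|].
  replace ((g y - a) / y - (g y + a) / y) with (- (2 * a / y)) by (field; lra).
  rewrite Rabs_Ropp, Rabs_right; [lra|]. apply Rle_ge, Rlt_le, Rdiv_lt_0_compat; lra.
Qed.

(* Near [0+], [(g y - a) / y] tends to [g' 0] while [(g y + a) / y] tends to [+oo]. *)
Lemma atan_gap_near_0 g a b y : 0 < a -> 0 < y -> 0 <= g y ->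
  Rabs (atan_gap g a y - (atan b - PI / 2)) <= Rabs ((g y - a) / y - b) + y / a.
Proof.
  intros Ha Hy Hg. unfold atan_gap.
  assert (Hq : 0 < (g y + a) / y) by (apply Rdiv_lt_0_compat; lra).
  destruct (atan_compl_bounds _ Hq) as [B1 B2]. rewrite Rinv_div in B2.
  assert (B3 : y / (g y + a) <= y / a).
  { apply Rmult_le_compat_l; [lra|]. apply Rinv_le_contravar; lra. }
  replace (atan ((g y - a) / y) - atan ((g y + a) / y) - (atan b - PI / 2))
    with ((atan ((g y - a) / y) - atan b) + (PI / 2 - atan ((g y + a) / y))) by ring.
  eapply Rle_trans; [apply Rabs_triang|]. rewrite (Rabs_right (PI / 2 - _)) by lra.
  pose proof (atan_lipschitz ((g y - a) / y) b). lra.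
Qed.

Lemma gap_weight_bound g p a Mp y : (forall y, Rabs (p y) <= Mp) ->
  Rabs (gap_weight g p a y) <= Mp * PI.
Proof.
  intros HM. unfold gap_weight. destruct (Rlt_dec 0 y); rewrite Rabs_mult;
    apply Rmult_le_compat; try apply Rabs_pos; try apply HM; [apply atan_gap_bound|].
  pose proof (atan_bound (p 0)). apply Rabs_le; lra.
Qed.

Section Kernel.

Variables (g p : R -> R) (a : R).
Hypothesis g_derive : forall y, is_derive g y (p y).

Lemma kernel_primitive_derive y : 0 < y ->
  is_derive (kernel_primitive g a) y (log_ratio g a y - 2 * p y * atan_gap g a y).
Proof.
  intros Hy. unfold kernel_primitive, log_ratio, atan_gap.
  assert (HN : 0 < y ^ 2 + (g y - a) ^ 2) by (pose proof (pow2_ge_0 (g y - a)); nra).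
  assert (HD : 0 < y ^ 2 + (g y + a) ^ 2) by (pose proof (pow2_ge_0 (g y + a)); nra).
  auto_derive.
  - repeat split; try exact (ex_intro _ _ (g_derive y)); try lra.
    apply Rdiv_lt_0_compat; lra.
  - replace (Derive (fun x => g x) y) with (p y) by (symmetry; apply is_derive_unique, g_derive).
    simpl. unfold Rminus, Rdiv. simpl in HN, HD.
    set (L := ln _). set (A1 := atan ((g y + - a) * / y)). set (A2 := atan ((g y + a) * / y)).
    field. repeat split; lra.
Qed.

Lemma atan_gap_continuous y : 0 < y -> continuous (atan_gap g a) y.
Proof.
  intros Hy. apply (ex_derive_continuous (K := R_AbsRing) (V := R_NormedModule)).
  unfold atan_gap. auto_derive. repeat split; try exact (ex_intro _ _ (g_derive y)); lra.
Qed.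

Lemma log_ratio_continuous y : 0 < y -> continuous (log_ratio g a) y.
Proof.
  intros Hy. apply (ex_derive_continuous (K := R_AbsRing) (V := R_NormedModule)).
  assert (HN : 0 < y ^ 2 + (g y - a) ^ 2) by (pose proof (pow2_ge_0 (g y - a)); nra).
  assert (HD : 0 < y ^ 2 + (g y + a) ^ 2) by (pose proof (pow2_ge_0 (g y + a)); nra).
  unfold log_ratio. auto_derive. repeat split; try exact (ex_intro _ _ (g_derive y)); try lra.
  apply Rdiv_lt_0_compat; lra.
Qed.

Hypothesis p_cont : forall y, continuous p y.

Lemma gap_weight_continuous_pos y : 0 < y -> continuous (gap_weight g p a) y.
Proof.
  intros Hy. apply continuous_ext_loc with (g := fun z => p z * atan_gap g a z).
  - apply filter_imp with (2 := open_gt 0 y Hy). intros z Hz. unfold gap_weight.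
    destruct (Rlt_dec 0 z); [reflexivity|lra].
  - apply (continuous_mult (K := R_AbsRing)); [apply p_cont|]. exact (atan_gap_continuous y Hy).
Qed.

Lemma RInt_u2_kernel al be : 0 < al -> al <= be ->
  RInt (u2_kernel g a) al be = / (4 * PI) * (kernel_primitive g a be - kernel_primitive g a al)
                               + / (2 * PI) * RInt (gap_weight g p a) al be.
Proof.
  intros Hal Hab.
  assert (Hm : Rmin al be = al) by (apply Rmin_left; lra).
  assert (HM : Rmax al be = be) by (apply Rmax_right; lra).
  set (df := fun y => log_ratio g a y - 2 * p y * atan_gap g a y).
  assert (IG : is_RInt df al be (minus (kernel_primitive g a be) (kernel_primitive g a al))).
  { apply (is_RInt_derive (V := R_CompleteNormedModule)); rewrite Hm, HM; intros x Hx.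
    - apply kernel_primitive_derive; lra.
    - apply (continuous_minus (V := R_NormedModule)); [apply log_ratio_continuous; lra|].
      apply (continuous_mult (K := R_AbsRing)); [|apply atan_gap_continuous; lra].
      apply (continuous_mult (K := R_AbsRing)); [apply continuous_const|apply p_cont]. }
  assert (Iq : ex_RInt (gap_weight g p a) al be).
  { apply (ex_RInt_continuous (V := R_CompleteNormedModule)); rewrite Hm, HM; intros x Hx.
    apply gap_weight_continuous_pos; lra. }
  apply (RInt_correct (V := R_CompleteNormedModule)) in Iq.
  apply is_RInt_unique.
  eapply is_RInt_ext; [|exact (is_RInt_plus _ _ _ _ _ _ (is_RInt_scal _ _ _ (/ (4 * PI)) _ IG)
                                          (is_RInt_scal _ _ _ (/ (2 * PI)) _ Iq))].
  rewrite Hm, HM. intros x Hx. unfold df, u2_kernel, gap_weight, scal, plus; simpl.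
  unfold mult; simpl. destruct (Rlt_dec 0 x); [|lra].
  field. pose proof PI_RGT_0; lra.
Qed.

End Kernel.

Lemma kernel_primitive_outside g a y : 0 < y -> g y = 0 -> kernel_primitive g a y = - 2 * PI * a.
Proof.
  intros Hy Hg. unfold kernel_primitive, log_ratio. rewrite Hg.
  replace ((y ^ 2 + (0 - a) ^ 2) / (y ^ 2 + (0 + a) ^ 2)) with 1
    by (field; pose proof (pow2_ge_0 a); nra).
  rewrite ln_1. replace ((0 - a) / y) with (- (a / y)) by (field; lra).
  rewrite atan_opp, Rplus_0_l. lra.
Qed.

Lemma RInt_gap_weight_outside g p a Y be : 0 < Y -> Y <= be -> (forall y, Y <= y -> p y = 0) ->
  RInt (gap_weight g p a) Y be = 0.
Proof.
  intros HY Hb Hp. rewrite (RInt_ext _ (fun _ => 0)).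
  - rewrite RInt_const. unfold scal; simpl; unfold mult; simpl; ring.
  - intros x Hx. rewrite Rmin_left, Rmax_right in Hx by lra.
    unfold gap_weight. destruct (Rlt_dec 0 x); [|lra]. rewrite Hp by lra. apply Rmult_0_l.
Qed.

Lemma ln_le_sub_1 x : 0 < x -> ln x <= x - 1.
Proof. intros Hx. pose proof (exp_ineq1_le (ln x)). rewrite exp_ln in H by lra. lra. Qed.

Lemma x_abs_ln_le_sqrt x : 0 < x <= 1 -> x * Rabs (ln x) <= 2 * sqrt x.
Proof.
  intros Hx. assert (Hs : 0 < sqrt x) by (apply sqrt_lt_R0; lra).
  assert (Hle : ln x <= 0) by (rewrite <- ln_1; apply ln_le; lra).
  assert (Hxs : x = sqrt x * sqrt x) by (rewrite sqrt_sqrt; lra).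
  assert (Hl : ln x = 2 * ln (sqrt x)) by (rewrite Hxs at 1; rewrite ln_mult by lra; ring).
  assert (Hi := ln_le_sub_1 (/ sqrt x) ltac:(apply Rinv_0_lt_compat; lra)).
  rewrite ln_Rinv in Hi by lra.
  rewrite Rabs_left1 by lra.
  replace (2 * sqrt x) with (x * (2 * / sqrt x)) by (rewrite Hxs at 1; field; lra).
  apply Rmult_le_compat_l; lra.
Qed.

Lemma kernel_primitive_bound g a y : 0 < a -> 0 < y <= 1 -> 0 <= g y -> Rabs (g y - a) < a ->
  Rabs (kernel_primitive g a y) <= y * (3 + 9 * a ^ 2) + 4 * sqrt y + 2 * PI * Rabs (g y - a).
Proof.
  intros Ha Hy Hg Hga. apply Rabs_def2 in Hga.
  set (h1 := g y - a) in *. set (h2 := g y + a).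
  assert (Hh2 : a <= h2 <= 3 * a) by (unfold h2, h1 in *; lra).
  set (N := y ^ 2 + h1 ^ 2). set (D := y ^ 2 + h2 ^ 2).
  assert (HN : y ^ 2 <= N) by (unfold N; pose proof (pow2_ge_0 h1); lra).
  assert (Hy2 : 0 < y ^ 2) by (apply pow_lt; lra).
  assert (HND : N <= D) by (unfold N, D, h2, h1 in *; nra).
  assert (HD : D <= 1 + 9 * a ^ 2) by (unfold D; nra).
  assert (HlnN : ln y + ln y <= ln N).
  { rewrite <- ln_mult by lra. apply ln_le; [nra|]. simpl in HN. lra. }
  assert (HlnND : ln N <= ln D) by (apply ln_le; lra).
  assert (HlnD := ln_le_sub_1 D ltac:(lra)).
  assert (Hxl := x_abs_ln_le_sqrt y Hy).
  assert (Hlny : ln y <= 0) by (rewrite <- ln_1; apply ln_le; lra).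
  rewrite Rabs_left1 in Hxl by lra.
  assert (T1 : Rabs (y * ln (N / D)) <= y * (1 + 9 * a ^ 2) + 4 * sqrt y).
  { rewrite ln_div, Rabs_mult, Rabs_right, Rabs_left1 by lra. nra. }
  assert (T2 : Rabs (2 * h1 * (PI / 2 - atan (h1 / y))) <= 2 * PI * Rabs h1).
  { rewrite !Rabs_mult, (Rabs_right 2) by lra.
    pose proof (atan_bound (h1 / y)). pose proof (Rabs_pos h1).
    assert (Rabs (PI / 2 - atan (h1 / y)) <= PI) by (apply Rabs_le; lra). nra. }
  assert (T3 : 0 <= 2 * h2 * (PI / 2 - atan (h2 / y)) <= 2 * y).
  { assert (Hq : 0 < h2 / y) by (apply Rdiv_lt_0_compat; lra).
    destruct (atan_compl_bounds _ Hq) as [B1 B2]. rewrite Rinv_div in B2.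
    split; [apply Rmult_le_pos; lra|].
    replace (2 * y) with (2 * h2 * (y / h2)) by (field; lra).
    apply Rmult_le_compat_l; lra. }
  change (kernel_primitive g a y) with
    (y * ln (N / D) + 2 * h1 * (PI / 2 - atan (h1 / y)) - 2 * h2 * (PI / 2 - atan (h2 / y))).
  apply Rabs_le_between in T1. apply Rabs_le_between in T2. apply Rabs_le. nra.
Qed.

Section HalfLine.

Variables (g p : R -> R) (a Mp : R).
Hypothesis a_pos : 0 < a.
Hypothesis g_0 : g 0 = a.
Hypothesis g_nonneg : forall y, 0 <= g y.
Hypothesis g_derive : forall y, is_derive g y (p y).
Hypothesis p_cont : forall y, continuous p y.
Hypothesis p_bound : forall y, Rabs (p y) <= Mp.

Let Mp_nonneg : 0 <= Mp.
Proof. eapply Rle_trans; [apply Rabs_pos|apply (p_bound 0)]. Qed.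

Lemma gap_weight_continuous_0 : continuous (gap_weight g p a) 0.
Proof.
  assert (HPI := PI_RGT_0).
  assert (Hpc := p_cont 0). apply continuity_pt_filterlim in Hpc.
  assert (Hd := g_derive 0). apply is_derive_Reals in Hd.
  apply continuity_pt_filterlim.
  unfold continuity_pt, continue_in, limit1_in, limit_in in *; simpl in *; unfold R_dist in *.
  intros eps Heps.
  set (e := eps / (4 * (Mp + 1))).
  assert (He : 0 < e) by (unfold e; apply Rdiv_lt_0_compat; lra).
  destruct (Hpc (eps / (4 * PI))) as [d1 [Hd1 H1]]; [apply Rdiv_lt_0_compat; lra|].
  destruct (Hd e He) as [d2 H2].
  exists (Rmin d1 (Rmin d2 (a * e))). split.
  { apply Rmin_pos; [lra|]. apply Rmin_pos; [apply cond_pos|nra]. }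
  intros z [_ Hz]. rewrite Rminus_0_r in Hz.
  unfold gap_weight. destruct (Rlt_dec 0 0) as [h|_]; [lra|].
  destruct (Rlt_dec 0 z) as [Hzp|Hzn]; [|rewrite Rminus_diag, Rabs_R0; lra].
  rewrite Rabs_right in Hz by lra.
  pose proof (Rmin_l d1 (Rmin d2 (a * e))). pose proof (Rmin_r d1 (Rmin d2 (a * e))).
  pose proof (Rmin_l d2 (a * e)). pose proof (Rmin_r d2 (a * e)).
  assert (Ap : Rabs (p z - p 0) < eps / (4 * PI)).
  { apply H1. split; [split; [exact I|lra]|]. rewrite Rminus_0_r, Rabs_right; lra. }
  assert (Aq : Rabs ((g z - a) / z - p 0) < e).
  { rewrite <- g_0, <- (Rplus_0_l z) at 1. apply H2; [lra|rewrite Rabs_right; lra]. }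
  assert (Az : z / a < e).
  { apply (Rmult_lt_reg_r a); [lra|]. unfold Rdiv; rewrite Rmult_assoc, Rinv_l, Rmult_1_r; lra. }
  assert (Ag := atan_gap_near_0 g a (p 0) z a_pos Hzp (g_nonneg z)).
  replace (p z * atan_gap g a z - p 0 * (atan (p 0) - PI / 2))
    with ((p z - p 0) * atan_gap g a z + p 0 * (atan_gap g a z - (atan (p 0) - PI / 2))) by ring.
  eapply Rle_lt_trans; [apply Rabs_triang|]. rewrite !Rabs_mult.
  assert (B1 : Rabs (p z - p 0) * Rabs (atan_gap g a z) <= eps / (4 * PI) * PI).
  { apply Rmult_le_compat; try apply Rabs_pos; [lra|apply atan_gap_bound]. }
  assert (B2 : Rabs (p 0) * Rabs (atan_gap g a z - (atan (p 0) - PI / 2)) <= Mp * (e + e)).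
  { apply Rmult_le_compat; try apply Rabs_pos; [apply p_bound|lra]. }
  assert (E1 : eps / (4 * PI) * PI = eps / 4) by (field; lra).
  assert (E2 : Mp * (e + e) = eps / 2 * (Mp / (Mp + 1))) by (unfold e; field; lra).
  assert (E3 : Mp / (Mp + 1) < 1).
  { apply (Rmult_lt_reg_r (Mp + 1)); [lra|]. unfold Rdiv; rewrite Rmult_assoc, Rinv_l; lra. }
  nra.
Qed.

Lemma ex_RInt_gap_weight u v : 0 <= u -> 0 <= v -> ex_RInt (gap_weight g p a) u v.
Proof.
  intros Hu Hv. apply (ex_RInt_continuous (V := R_CompleteNormedModule)). intros z Hz.
  assert (0 <= z) by (eapply Rle_trans; [|apply Hz]; apply Rmin_glb; lra).
  destruct (Req_dec z 0) as [->|Hn].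
  - exact gap_weight_continuous_0.
  - apply gap_weight_continuous_pos; auto; lra.
Qed.

Lemma kernel_primitive_near_0 eps : 0 < eps -> exists del, 0 < del /\
  forall y, 0 < y < del -> Rabs (kernel_primitive g a y) < eps.
Proof.
  intros Heps. assert (HPI := PI_RGT_0).
  assert (Hc : continuous g 0).
  { apply (ex_derive_continuous (K := R_AbsRing) (V := R_NormedModule)).
    exists (p 0); apply g_derive. }
  apply continuity_pt_filterlim in Hc.
  unfold continuity_pt, continue_in, limit1_in, limit_in in Hc; simpl in Hc; unfold R_dist in Hc.
  destruct (Hc (Rmin a (eps / (6 * PI)))) as [d1 [Hd1 H1]].
  { apply Rmin_pos; [lra|apply Rdiv_lt_0_compat; lra]. }
  set (K1 := 3 + 9 * a ^ 2).
  assert (HK1 : 0 < K1) by (unfold K1; pose proof (pow2_ge_0 a); lra).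
  exists (Rmin (Rmin 1 d1) (Rmin (eps / (3 * K1)) ((eps / 12) ^ 2))). split.
  { repeat apply Rmin_pos; try lra; [apply Rdiv_lt_0_compat; lra|apply pow_lt; lra]. }
  intros y [Hy Hyd].
  pose proof (Rmin_l (Rmin 1 d1) (Rmin (eps / (3 * K1)) ((eps / 12) ^ 2))).
  pose proof (Rmin_r (Rmin 1 d1) (Rmin (eps / (3 * K1)) ((eps / 12) ^ 2))).
  pose proof (Rmin_l 1 d1). pose proof (Rmin_r 1 d1).
  pose proof (Rmin_l (eps / (3 * K1)) ((eps / 12) ^ 2)).
  pose proof (Rmin_r (eps / (3 * K1)) ((eps / 12) ^ 2)).
  pose proof (Rmin_l a (eps / (6 * PI))). pose proof (Rmin_r a (eps / (6 * PI))).
  assert (Hga : Rabs (g y - a) < Rmin a (eps / (6 * PI))).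
  { rewrite <- g_0 at 1. apply H1. split; [split; [exact I|lra]|].
    rewrite Rminus_0_r, Rabs_right; lra. }
  assert (Hsq : sqrt y < eps / 12).
  { rewrite <- (sqrt_pow2 (eps / 12)) by lra. apply sqrt_lt_1_alt; lra. }
  assert (B := kernel_primitive_bound g a y a_pos ltac:(lra) (g_nonneg y) ltac:(lra)).
  assert (F1 : y * K1 < eps / 3).
  { replace (eps / 3) with (eps / (3 * K1) * K1) by (field; lra).
    apply Rmult_lt_compat_r; lra. }
  assert (F2 : 2 * PI * Rabs (g y - a) < eps / 3).
  { replace (eps / 3) with (2 * PI * (eps / (6 * PI))) by (field; lra).
    apply Rmult_lt_compat_l; lra. }
  unfold K1 in F1. lra.
Qed.

Lemma RInt_u2_kernel_far Y al be : 0 < al -> al <= be -> 0 < Y -> Y <= be ->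
  (forall y, Y <= y -> g y = 0 /\ p y = 0) ->
  RInt (u2_kernel g a) al be
  = - a / 2 + / (2 * PI) * RInt (gap_weight g p a) 0 Y
    - kernel_primitive g a al / (4 * PI) - RInt (gap_weight g p a) 0 al / (2 * PI).
Proof.
  intros Hal Hab HY HYbe HgpY. assert (HPI := PI_RGT_0).
  rewrite (RInt_u2_kernel g p a g_derive p_cont al be Hal Hab).
  rewrite (kernel_primitive_outside g a be) by (try apply HgpY; lra).
  assert (C1 := RInt_Chasles (V := R_CompleteNormedModule) (gap_weight g p a) 0 al be
                  (ex_RInt_gap_weight 0 al ltac:(lra) ltac:(lra))
                  (ex_RInt_gap_weight al be ltac:(lra) ltac:(lra))).
  assert (C2 := RInt_Chasles (V := R_CompleteNormedModule) (gap_weight g p a) 0 Y be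
                  (ex_RInt_gap_weight 0 Y ltac:(lra) ltac:(lra))
                  (ex_RInt_gap_weight Y be ltac:(lra) ltac:(lra))).
  rewrite (RInt_gap_weight_outside g p a Y be) in C2 by (try apply HgpY; lra).
  unfold plus in C1, C2; simpl in C1, C2.
  replace (RInt (gap_weight g p a) al be)
    with (RInt (gap_weight g p a) 0 Y - RInt (gap_weight g p a) 0 al) by lra.
  assert (E : forall G I0 IY : R, / (4 * PI) * (- 2 * PI * a - G) + / (2 * PI) * (IY - I0)
                                   = - a / 2 + / (2 * PI) * IY - G / (4 * PI) - I0 / (2 * PI))
    by (intros; field; lra).
  apply E.
Qed.

Lemma improper_int_u2_kernel Y : 0 < Y -> (forall y, Y <= y -> g y = 0 /\ p y = 0) ->
  improper_int_pos (u2_kernel g a) (- a / 2 + / (2 * PI) * RInt (gap_weight g p a) 0 Y).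
Proof.
  intros HY HgpY. assert (HPI := PI_RGT_0). split.
  { intros al be Hal Hab. constructor. apply ex_RInt_Reals_0.
    apply (ex_RInt_continuous (V := R_CompleteNormedModule)). intros z Hz.
    rewrite Rmin_left in Hz by lra.
    apply (continuous_mult (K := R_AbsRing)); [apply continuous_const|].
    apply (log_ratio_continuous g p); [exact g_derive|lra]. }
  intros eta Heta.
  destruct (kernel_primitive_near_0 (2 * PI * eta)) as [dG [HdG HG]]; [nra|].
  exists (Rmin dG (eta / (Mp + 1))), Y. split.
  { apply Rmin_pos; [lra|]. apply Rdiv_lt_0_compat; lra. }
  intros al be Hal Hbe Hab pr. rewrite <- RInt_Reals.
  pose proof (Rmin_l dG (eta / (Mp + 1))). pose proof (Rmin_r dG (eta / (Mp + 1))).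
  rewrite (RInt_u2_kernel_far Y al be) by (auto; lra).
  assert (B1 : Rabs (kernel_primitive g a al / (4 * PI)) < eta / 2).
  { unfold Rdiv. rewrite Rabs_mult, (Rabs_right (/ (4 * PI)))
      by (apply Rle_ge, Rlt_le, Rinv_0_lt_compat; lra).
    apply (Rmult_lt_reg_r (4 * PI)); [lra|]. rewrite Rmult_assoc, Rinv_l by lra.
    pose proof (HG al ltac:(lra)). lra. }
  assert (B2 : Rabs (RInt (gap_weight g p a) 0 al / (2 * PI)) < eta / 2).
  { assert (Bq := abs_RInt_le_const (gap_weight g p a) 0 al (Mp * PI) ltac:(lra)
                    (ex_RInt_gap_weight 0 al ltac:(lra) ltac:(lra))
                    (fun t _ => gap_weight_bound g p a Mp t p_bound)).
    unfold Rdiv. rewrite Rabs_mult, (Rabs_right (/ (2 * PI)))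
      by (apply Rle_ge, Rlt_le, Rinv_0_lt_compat; lra).
    apply (Rmult_lt_reg_r (2 * PI)); [lra|]. rewrite Rmult_assoc, Rinv_l by lra.
    rewrite Rminus_0_r in Bq.
    assert (al * (Mp + 1) < eta).
    { replace eta with (eta / (Mp + 1) * (Mp + 1)) by (field; lra).
      apply Rmult_lt_compat_r; lra. }
    nra. }
  set (G := kernel_primitive g a al) in *. set (I0 := RInt (gap_weight g p a) 0 al) in *.
  set (IY := RInt (gap_weight g p a) 0 Y).
  replace (- a / 2 + / (2 * PI) * IY - G / (4 * PI) - I0 / (2 * PI) - (- a / 2 + / (2 * PI) * IY))
    with (- (G / (4 * PI)) + - (I0 / (2 * PI))) by ring.
  eapply Rle_lt_trans; [apply Rabs_triang|]. rewrite !Rabs_Ropp. lra.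
Qed.

End HalfLine.

Lemma weighted_atan_symmetric_increment_le a y b Mf : 0 < a -> 0 < y -> Rabs b <= Mf ->
  Rabs (b * (2 * atan b - atan (b + 2 * a / y) + atan (2 * a / y - b)))
  <= 32 * Mf * (1 + Mf) * (a ^ 2 / (y ^ 2 + a ^ 2)).
Proof.
  intros Ha Hy Hb. rewrite Rabs_mult.
  assert (HMf : 0 <= Mf) by (eapply Rle_trans; [apply Rabs_pos|exact Hb]).
  assert (Hy2 : 0 < y ^ 2 + a ^ 2) by (pose proof (pow2_ge_0 y); pose proof (pow2_ge_0 a); nra).
  assert (0 <= Mf * Mf) by nra.
  destruct (Rle_dec y a) as [Hya|Hya].
  - assert (Hq : 1 / 2 <= a ^ 2 / (y ^ 2 + a ^ 2)).
    { replace (a ^ 2 / (y ^ 2 + a ^ 2)) with (1 / 2 + (a ^ 2 - y ^ 2) / (2 * (y ^ 2 + a ^ 2)))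
        by (field; lra).
      assert (0 <= (a ^ 2 - y ^ 2) / (2 * (y ^ 2 + a ^ 2))); [|lra].
      apply Rdiv_le_0_compat; [nra|lra]. }
    assert (Hp : Rabs (2 * atan b - atan (b + 2 * a / y) + atan (2 * a / y - b)) <= 2 * PI).
    { pose proof (atan_bound b). pose proof (atan_bound (b + 2 * a / y)).
      pose proof (atan_bound (2 * a / y - b)). apply Rabs_le; lra. }
    pose proof PI_4.
    apply Rle_trans with (Mf * (2 * PI)); [apply Rmult_le_compat; try apply Rabs_pos; auto|nra].
  - assert (Hs : 0 <= 2 * a / y) by (apply Rlt_le, Rdiv_lt_0_compat; lra).
    pose proof (atan_symmetric_increment_bound b (2 * a / y) Hs) as Hp.
    apply Rle_trans with (Mf * (4 * Mf * (2 * a / y) ^ 2)).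
    + apply Rmult_le_compat; try apply Rabs_pos; auto.
      eapply Rle_trans; [exact Hp|]. apply Rmult_le_compat_r; [apply pow2_ge_0|lra].
    + replace (Mf * (4 * Mf * (2 * a / y) ^ 2)) with (16 * (Mf * Mf) * (a ^ 2 / y ^ 2))
        by (field; lra).
      assert (Hq : a ^ 2 / y ^ 2 <= 2 * (a ^ 2 / (y ^ 2 + a ^ 2))).
      { replace (2 * (a ^ 2 / (y ^ 2 + a ^ 2))) with (a ^ 2 / ((y ^ 2 + a ^ 2) / 2))
          by (field; lra).
        unfold Rdiv. apply Rmult_le_compat_l; [apply pow2_ge_0|].
        apply Rinv_le_contravar; [lra|]. nra. }
      assert (0 <= a ^ 2 / y ^ 2) by (apply Rdiv_le_0_compat; [apply pow2_ge_0|apply pow_lt; lra]).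
      nra.
Qed.

(* The two half-lines are paired: with [s = 2a/y] the terms [phi u] and [phi v] of
   [phi t = atan t - atan (t + s)] are compared with [phi b] and [phi (-b)], whose
   difference is the symmetric increment above. *)
Lemma gap_pair_bound a y b Mf W P1 P2 G1 G2 :
  0 < a -> 0 < y -> Rabs b <= Mf ->
  Rabs (P1 - b) <= W -> Rabs (P2 + b) <= W ->
  Rabs ((G1 - a) / y - b) <= W -> Rabs ((G2 - a) / y + b) <= W ->
  Rabs (P1 * (atan ((G1 - a) / y) - atan ((G1 + a) / y))
        + P2 * (atan ((G2 - a) / y) - atan ((G2 + a) / y)))
  <= a * ((4 + 4 * Mf) * (W / y) + 32 * Mf * (1 + Mf) * (a / (y ^ 2 + a ^ 2))).
Proof.
  intros Ha Hy Hb H1 H2 H3 H4.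
  assert (HW : 0 <= W) by (eapply Rle_trans; [apply Rabs_pos|exact H1]).
  assert (HMf : 0 <= Mf) by (eapply Rle_trans; [apply Rabs_pos|exact Hb]).
  set (s := 2 * a / y).
  assert (Hs : 0 < s) by (unfold s; apply Rdiv_lt_0_compat; lra).
  set (u := (G1 - a) / y) in *. set (v := (G2 - a) / y) in *.
  replace ((G1 + a) / y) with (u + s) by (unfold u, s; field; lra).
  replace ((G2 + a) / y) with (v + s) by (unfold v, s; field; lra).
  set (phi := fun t => atan t - atan (t + s)).
  change (atan u - atan (u + s)) with (phi u). change (atan v - atan (v + s)) with (phi v).
  assert (Hphi : forall t, Rabs (phi t) <= s).
  { intros t. unfold phi. eapply Rle_trans; [apply atan_lipschitz|].
    replace (t - (t + s)) with (- s) by ring. rewrite Rabs_Ropp, Rabs_right; lra. }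
  assert (Hlip : forall t t', Rabs (phi t - phi t') <= s * Rabs (t - t'))
    by (intros t t'; apply atan_increment_lipschitz; lra).
  replace (P1 * phi u + P2 * phi v) with
    ((P1 - b) * phi u + (P2 + b) * phi v + b * (phi u - phi b) - b * (phi v - phi (- b))
     + b * (phi b - phi (- b))) by ring.
  assert (T1 : Rabs ((P1 - b) * phi u) <= W * s).
  { rewrite Rabs_mult. apply Rmult_le_compat; try apply Rabs_pos; auto. }
  assert (T2 : Rabs ((P2 + b) * phi v) <= W * s).
  { rewrite Rabs_mult. apply Rmult_le_compat; try apply Rabs_pos; auto. }
  assert (T3 : Rabs (b * (phi u - phi b)) <= Mf * (s * W)).
  { rewrite Rabs_mult. apply Rmult_le_compat; try apply Rabs_pos; auto.
    eapply Rle_trans; [apply Hlip|]. apply Rmult_le_compat_l; lra. }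
  assert (T4 : Rabs (b * (phi v - phi (- b))) <= Mf * (s * W)).
  { rewrite Rabs_mult. apply Rmult_le_compat; try apply Rabs_pos; auto.
    eapply Rle_trans; [apply Hlip|]. apply Rmult_le_compat_l; [lra|].
    replace (v - - b) with (v + b) by ring. exact H4. }
  assert (T5 : Rabs (b * (phi b - phi (- b))) <= 32 * Mf * (1 + Mf) * (a ^ 2 / (y ^ 2 + a ^ 2))).
  { replace (phi b - phi (- b)) with (2 * atan b - atan (b + 2 * a / y) + atan (2 * a / y - b))
      by (unfold phi, s; rewrite atan_opp; replace (- b + 2 * a / y) with (2 * a / y - b) by ring;
          ring).
    apply weighted_atan_symmetric_increment_le; auto. }
  replace (a * ((4 + 4 * Mf) * (W / y) + 32 * Mf * (1 + Mf) * (a / (y ^ 2 + a ^ 2))))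
    with (W * s + W * s + Mf * (s * W) + Mf * (s * W)
          + 32 * Mf * (1 + Mf) * (a ^ 2 / (y ^ 2 + a ^ 2))).
  2: { unfold s. field. split; [|lra]. pose proof (pow2_ge_0 y); pose proof (pow2_ge_0 a); nra. }
  unfold Rminus.
  repeat (eapply Rle_trans; [apply Rabs_triang|];
          apply Rplus_le_compat; [|rewrite ?Rabs_Ropp; assumption]).
  assumption.
Qed.

Lemma is_RInt_poisson_kernel a u v : 0 < a ->
  is_RInt (fun y => a / (y ^ 2 + a ^ 2)) u v (atan (v / a) - atan (u / a)).
Proof.
  intros Ha.
  apply (is_RInt_derive (V := R_CompleteNormedModule) (fun y => atan (y / a))); intros x _.
  - auto_derive; [trivial|]. simpl. assert (0 < x * x + a * a) by nra.
    field_simplify; try reflexivity; try split; lra.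
  - apply (ex_derive_continuous (K := R_AbsRing) (V := R_NormedModule)).
    auto_derive. pose proof (pow2_ge_0 x). nra.
Qed.

Lemma sup_norm_ge h M z : sup_norm h M -> Rabs (h z) <= M.
Proof. intros [H _]. apply H. exists z. reflexivity. Qed.

Lemma sup_norm_nonneg h M : sup_norm h M -> 0 <= M.
Proof. intros HM. eapply Rle_trans; [apply Rabs_pos|exact (sup_norm_ge h M 0 HM)]. Qed.

Lemma modulus_at_ge h r w u v : modulus_at h r w -> Rabs (u - v) <= r -> Rabs (h u - h v) <= w.
Proof. intros [H _] Huv. apply H. exists u, v. split; [exact Huv|reflexivity]. Qed.

Lemma modulus_at_monotone h r1 r2 w1 w2 :
  modulus_at h r1 w1 -> modulus_at h r2 w2 -> r1 <= r2 -> w1 <= w2.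
Proof.
  intros H1 [H2 _] Hr. apply H1. intros v [u [u' [Hu ->]]]. apply H2.
  exists u, u'. split; [lra|reflexivity].
Qed.

Lemma modulus_at_nonneg h r w : 0 <= r -> modulus_at h r w -> 0 <= w.
Proof.
  intros Hr Hw. apply (Rle_trans _ (Rabs (h 0 - h 0))); [apply Rabs_pos|].
  apply (modulus_at_ge h r); [exact Hw|]. rewrite Rminus_diag, Rabs_R0. exact Hr.
Qed.

Lemma difference_quotients_modulus f f' w x y : (forall z, derivable_pt_lim f z (f' z)) ->
  0 < y -> modulus_at f' y w ->
  Rabs ((f (x + y) - f x) / y - f' x) <= w /\ Rabs ((f (x - y) - f x) / y + f' x) <= w.
Proof.
  intros Hd Hy Hm. split.
  - destruct (MVT_cor2 f f' x (x + y)) as [c [Hc1 Hc2]]; [lra|intros; apply Hd|].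
    replace ((f (x + y) - f x) / y) with (f' c) by (rewrite Hc1; field; lra).
    apply (modulus_at_ge f' y); [exact Hm|]. rewrite Rabs_right; lra.
  - destruct (MVT_cor2 f f' (x - y) x) as [c [Hc1 Hc2]]; [lra|intros; apply Hd|].
    replace ((f (x - y) - f x) / y) with (- f' c)
      by (replace (f (x - y) - f x) with (- (f x - f (x - y))) by ring; rewrite Hc1; field; lra).
    replace (- f' c + f' x) with (f' x - f' c) by ring.
    apply (modulus_at_ge f' y); [exact Hm|]. rewrite Rabs_right; lra.
Qed.

Lemma improper_int_01_partial g L : improper_int_01 g L ->
  forall eta, 0 < eta -> exists del, 0 < del /\ forall al, 0 < al < del -> al <= 1 ->
    ex_RInt g al 1 /\ RInt g al 1 <= L + eta.
Proof.
  intros [Hi Hl] eta Heta. destruct (Hl eta Heta) as [del [Hdel H]].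
  exists del. split; [exact Hdel|]. intros al Hal Hal1.
  destruct (Hi al ltac:(lra)) as [pr].
  split; [apply ex_RInt_Reals_1; exact pr|].
  rewrite (RInt_Reals _ _ _ pr). specialize (H al Hal Hal1 pr). apply Rabs_def2 in H. lra.
Qed.

Section Dini.

Variables (h w : R -> R) (Dh : R).
Hypothesis w_modulus : forall r, 0 < r <= 1 -> modulus_at h r (w r).
Hypothesis w_dini : improper_int_01 (fun r => w r / r) Dh.

(* [w] is nondecreasing, so [int_(1/2)^1 w r / r dr >= w (1/2) / 2]. *)
Lemma modulus_half_nonneg : 0 <= w (1 / 2).
Proof. apply (modulus_at_nonneg h (1 / 2)); [lra|apply w_modulus; lra]. Qed.

Lemma modulus_half_le_dini : w (1 / 2) <= 2 * Dh.
Proof.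
  assert (Hw0 := modulus_half_nonneg). apply Rle_plus_epsilon. intros eps Heps.
  destruct (improper_int_01_partial _ _ w_dini (eps / 2) ltac:(lra)) as [del [Hdel H]].
  pose proof (Rmin_l (del / 2) (1 / 4)). pose proof (Rmin_r (del / 2) (1 / 4)).
  set (al := Rmin (del / 2) (1 / 4)) in *.
  assert (Hal : 0 < al) by (apply Rmin_pos; lra).
  destruct (H al ltac:(lra) ltac:(lra)) as [Ex Hle].
  assert (E1 : ex_RInt (fun r => w r / r) al (1 / 2))
    by (apply (ex_RInt_Chasles_1 (V := R_CompleteNormedModule) _ _ _ 1); [lra|exact Ex]).
  assert (E2 : ex_RInt (fun r => w r / r) (1 / 2) 1)
    by (apply (ex_RInt_Chasles_2 (V := R_CompleteNormedModule) _ al); [lra|exact Ex]).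
  assert (C := RInt_Chasles (V := R_CompleteNormedModule) _ _ _ _ E1 E2).
  unfold plus in C; simpl in C.
  assert (P1 : 0 <= RInt (fun r => w r / r) al (1 / 2)).
  { apply RInt_ge_0; [lra|exact E1|]. intros x Hx. apply Rdiv_le_0_compat; [|lra].
    apply (modulus_at_nonneg h x); [lra|apply w_modulus; lra]. }
  assert (P2 : RInt (fun _ => w (1 / 2)) (1 / 2) 1 <= RInt (fun r => w r / r) (1 / 2) 1).
  { apply RInt_le; [lra|apply (ex_RInt_const (V := R_NormedModule))|exact E2|]. intros x Hx.
    assert (w (1 / 2) <= w x)
      by (apply (modulus_at_monotone h (1 / 2) x); [apply w_modulus; lra|apply w_modulus; lra|lra]).
    apply (Rmult_le_reg_r x); [lra|]. replace (w x / x * x) with (w x) by (field; lra). nra. }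
  rewrite RInt_const in P2. unfold scal in P2; simpl in P2; unfold mult in P2; simpl in P2.
  lra.
Qed.

Lemma dini_nonneg : 0 <= Dh.
Proof. pose proof modulus_half_nonneg. pose proof modulus_half_le_dini. lra.
Qed.

Lemma increment_chain_le z (k : nat) : Rabs (h z - h (z + INR k / 2)) <= INR k * w (1 / 2).
Proof.
  induction k as [|k IH].
  - simpl. replace (z + 0 / 2) with z by field. rewrite Rminus_diag, Rabs_R0. lra.
  - rewrite S_INR.
    replace (h z - h (z + (INR k + 1) / 2)) with
      ((h z - h (z + INR k / 2)) + (h (z + INR k / 2) - h (z + (INR k + 1) / 2))) by ring.
    eapply Rle_trans; [apply Rabs_triang|].
    assert (Rabs (h (z + INR k / 2) - h (z + (INR k + 1) / 2)) <= w (1 / 2)).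
    { apply (modulus_at_ge h (1 / 2)); [apply w_modulus; lra|].
      replace (z + INR k / 2 - (z + (INR k + 1) / 2)) with (- (1 / 2)) by field.
      rewrite Rabs_Ropp, Rabs_right; lra. }
    lra.
Qed.

(* A function vanishing off [[m0, M0]] is reached from any point by [N] steps of length
   [1/2], each changing it by at most [w (1/2) <= 2 Dh]. *)
Lemma sup_norm_le_dini (K : R -> Prop) m0 M0 (N : nat) Mh :
  (forall z, K z -> m0 <= z <= M0) -> 2 * (M0 - m0) < INR N ->
  (forall z, ~ K z -> h z = 0) -> sup_norm h Mh -> Mh <= 2 * INR N * Dh.
Proof.
  intros HK HN Hsupp [_ Hlub].
  assert (Hwh := modulus_half_le_dini).
  assert (Hw0 := modulus_half_nonneg).
  assert (HN0 : 0 <= INR N) by apply pos_INR.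
  apply Hlub. intros v [z ->].
  destruct (classic (K z)) as [Kz|nKz].
  - assert (Hc := increment_chain_le z N).
    destruct (HK z Kz).
    rewrite (Hsupp (z + INR N / 2)), Rminus_0_r in Hc by (intros Kz'; destruct (HK _ Kz'); lra).
    nra.
  - rewrite Hsupp, Rabs_R0 by exact nKz. nra.
Qed.

End Dini.

Section GapWeightSum.

Variables (g1 p1 g2 p2 w : R -> R) (a b Mf Dw : R).
Hypothesis a_pos : 0 < a.
Hypothesis b_bound : Rabs b <= Mf.
Hypotheses (g1_0 : g1 0 = a) (g2_0 : g2 0 = a).
Hypotheses (g1_nonneg : forall y, 0 <= g1 y) (g2_nonneg : forall y, 0 <= g2 y).
Hypotheses (g1_derive : forall y, is_derive g1 y (p1 y)) (g2_derive : forall y, is_derive g2 y (p2 y)).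
Hypotheses (p1_cont : forall y, continuous p1 y) (p2_cont : forall y, continuous p2 y).
Hypotheses (p1_bound : forall y, Rabs (p1 y) <= Mf) (p2_bound : forall y, Rabs (p2 y) <= Mf).
Hypothesis close_to_b : forall y, 0 < y <= 1 ->
  Rabs (p1 y - b) <= w y /\ Rabs (p2 y + b) <= w y /\
  Rabs ((g1 y - a) / y - b) <= w y /\ Rabs ((g2 y - a) / y + b) <= w y.
Hypothesis w_dini : improper_int_01 (fun r => w r / r) Dw.

Let S y := gap_weight g1 p1 a y + gap_weight g2 p2 a y.

Let Mf_nonneg : 0 <= Mf.
Proof. eapply Rle_trans; [apply Rabs_pos|exact b_bound]. Qed.

Let ex_RInt_S u v : 0 <= u -> 0 <= v -> ex_RInt S u v.
Proof.
  intros Hu Hv. apply (ex_RInt_plus (V := R_NormedModule));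
    [apply (ex_RInt_gap_weight g1 p1 a Mf)|apply (ex_RInt_gap_weight g2 p2 a Mf)]; auto.
Qed.

Lemma RInt_gap_weight_sum_far Y : 1 <= Y -> Rabs (RInt S 1 Y) <= (Y - 1) * (4 * Mf * a).
Proof.
  intros HY. apply abs_RInt_le_const; [lra|apply ex_RInt_S; lra|]. intros t Ht.
  unfold S, gap_weight. destruct (Rlt_dec 0 t) as [_|]; [|lra].
  eapply Rle_trans; [apply Rabs_triang|]. rewrite !Rabs_mult.
  assert (Ht2 : 2 * a / t <= 2 * a).
  { unfold Rdiv. rewrite <- (Rmult_1_r (2 * a)) at 2. apply Rmult_le_compat_l; [lra|].
    rewrite <- Rinv_1. apply Rinv_le_contravar; lra. }
  assert (Rabs (p1 t) * Rabs (atan_gap g1 a t) <= Mf * (2 * a)).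
  { apply Rmult_le_compat; try apply Rabs_pos; auto.
    pose proof (atan_gap_le g1 a t a_pos ltac:(lra)). lra. }
  assert (Rabs (p2 t) * Rabs (atan_gap g2 a t) <= Mf * (2 * a)).
  { apply Rmult_le_compat; try apply Rabs_pos; auto.
    pose proof (atan_gap_le g2 a t a_pos ltac:(lra)). lra. }
  lra.
Qed.

Lemma RInt_gap_weight_sum_from al : 0 < al <= 1 -> ex_RInt (fun r => w r / r) al 1 ->
  Rabs (RInt S al 1)
  <= a * ((4 + 4 * Mf) * RInt (fun r => w r / r) al 1 + 32 * Mf * (1 + Mf) * (PI / 2)).
Proof.
  intros Hal ExW.
  set (B := fun y => a * ((4 + 4 * Mf) * (w y / y) + 32 * Mf * (1 + Mf) * (a / (y ^ 2 + a ^ 2)))).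
  set (VB := a * ((4 + 4 * Mf) * RInt (fun r => w r / r) al 1
                  + 32 * Mf * (1 + Mf) * (atan (1 / a) - atan (al / a)))).
  assert (IB : is_RInt B al 1 VB).
  { apply (RInt_correct (V := R_CompleteNormedModule)) in ExW.
    exact (is_RInt_scal _ _ _ a _ (is_RInt_plus _ _ _ _ _ _
             (is_RInt_scal _ _ _ (4 + 4 * Mf) _ ExW)
             (is_RInt_scal _ _ _ (32 * Mf * (1 + Mf)) _ (is_RInt_poisson_kernel a al 1 a_pos)))). }
  assert (ExA : ex_RInt (fun t => Rabs (S t)) al 1).
  { apply (ex_RInt_continuous (V := R_CompleteNormedModule)). intros z Hz.
    rewrite Rmin_left in Hz by lra. apply continuous_Rabs_comp.
    apply (continuous_plus (V := R_NormedModule));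
      apply gap_weight_continuous_pos; auto; lra. }
  apply Rle_trans with VB.
  - eapply Rle_trans; [apply abs_RInt_le; [lra|apply ex_RInt_S; lra]|].
    rewrite <- (is_RInt_unique _ _ _ _ IB).
    apply RInt_le; [lra|exact ExA|exists VB; exact IB|]. intros x Hx.
    destruct (close_to_b x ltac:(lra)) as [P1 [P2 [P3 P4]]].
    unfold S, gap_weight, atan_gap. destruct (Rlt_dec 0 x) as [_|]; [|lra].
    apply (gap_pair_bound a x b Mf (w x)); auto; lra.
  - unfold VB. apply Rmult_le_compat_l; [lra|]. apply Rplus_le_compat_l.
    apply Rmult_le_compat_l; [nra|]. pose proof (atan_bound (1 / a)).
    assert (0 <= atan (al / a)) by (apply atan_nonneg, Rdiv_le_0_compat; lra). lra.
Qed.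

Lemma RInt_gap_weight_sum_near :
  Rabs (RInt S 0 1) <= a * (4 + 4 * Mf) * Dw + a * (16 * PI * Mf * (1 + Mf)).
Proof.
  assert (HPI := PI_RGT_0).
  apply Rle_plus_epsilon. intros eps Heps.
  set (c1 := a * (4 + 4 * Mf) + 1).
  assert (Hc1 : 0 < c1) by (unfold c1; nra).
  destruct (improper_int_01_partial _ _ w_dini (eps / (2 * c1))) as [del [Hdel Hdi]].
  { apply Rdiv_lt_0_compat; lra. }
  set (e0 := eps / (2 * (2 * Mf * PI + 1))).
  assert (He0 : 0 < e0) by (apply Rdiv_lt_0_compat; nra).
  pose proof (Rmin_l (del / 2) (Rmin (1 / 2) e0)). pose proof (Rmin_r (del / 2) (Rmin (1 / 2) e0)).
  pose proof (Rmin_l (1 / 2) e0). pose proof (Rmin_r (1 / 2) e0).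
  set (al := Rmin (del / 2) (Rmin (1 / 2) e0)) in *.
  assert (Hal : 0 < al) by (repeat apply Rmin_pos; lra).
  destruct (Hdi al ltac:(lra) ltac:(lra)) as [ExW HW].
  assert (C := RInt_Chasles (V := R_CompleteNormedModule) S 0 al 1
                 (ex_RInt_S 0 al ltac:(lra) ltac:(lra)) (ex_RInt_S al 1 ltac:(lra) ltac:(lra))).
  unfold plus in C; simpl in C. rewrite <- C.
  assert (B0 : Rabs (RInt S 0 al) <= (al - 0) * (Mf * PI + Mf * PI)).
  { apply abs_RInt_le_const; [lra|apply ex_RInt_S; lra|]. intros t Ht.
    eapply Rle_trans; [apply Rabs_triang|].
    apply Rplus_le_compat; apply gap_weight_bound; auto. }
  assert (B0' : al * (2 * Mf * PI + 1) <= eps / 2).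
  { replace (eps / 2) with (e0 * (2 * Mf * PI + 1)) by (unfold e0; field; nra).
    apply Rmult_le_compat_r; nra. }
  assert (B1 := RInt_gap_weight_sum_from al ltac:(lra) ExW).
  assert (HE : a * (4 + 4 * Mf) * (eps / (2 * c1)) <= eps / 2).
  { replace (eps / 2) with (c1 * (eps / (2 * c1))) by (field; lra).
    apply Rmult_le_compat_r; [apply Rlt_le, Rdiv_lt_0_compat; lra|unfold c1; lra]. }
  assert (a * (4 + 4 * Mf) * RInt (fun r => w r / r) al 1
          <= a * (4 + 4 * Mf) * (Dw + eps / (2 * c1))) by (apply Rmult_le_compat_l; nra).
  eapply Rle_trans; [apply Rabs_triang|]. nra.
Qed.

Lemma RInt_gap_weight_sum_bound Y : 1 <= Y ->
  Rabs (RInt (gap_weight g1 p1 a) 0 Y + RInt (gap_weight g2 p2 a) 0 Y)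
  <= a * ((4 + 4 * Mf) * Dw + 16 * PI * Mf * (1 + Mf) + 4 * Mf * (Y - 1)).
Proof.
  intros HY.
  replace (RInt (gap_weight g1 p1 a) 0 Y + RInt (gap_weight g2 p2 a) 0 Y) with (RInt S 0 Y)
    by (apply (RInt_plus (V := R_CompleteNormedModule));
        apply (ex_RInt_gap_weight _ _ a Mf); auto; lra).
  rewrite <- (RInt_Chasles (V := R_CompleteNormedModule) S 0 1 Y)
    by (apply ex_RInt_S; lra).
  unfold plus; simpl.
  pose proof (RInt_gap_weight_sum_far Y HY). pose proof RInt_gap_weight_sum_near.
  eapply Rle_trans; [apply Rabs_triang|]. nra.
Qed.

End GapWeightSum.

Lemma improper_int_pos_0 (g : R -> R) : (forall y, 0 < y -> g y = 0) -> improper_int_pos g 0.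
Proof.
  intros H. split.
  - intros a b Ha Hab. constructor. apply ex_RInt_Reals_0.
    apply (ex_RInt_ext (V := R_CompleteNormedModule) (fun _ => 0));
      [|apply (ex_RInt_const (V := R_NormedModule))].
    intros x Hx. rewrite Rmin_left in Hx by lra. rewrite H by lra. reflexivity.
  - intros eta Heta. exists 1, 0. split; [lra|]. intros a b Ha Hb Hab pr.
    rewrite <- RInt_Reals, (RInt_ext _ (fun _ => 0)).
    + rewrite RInt_const. unfold scal; simpl; unfold mult; simpl.
      rewrite Rmult_0_r, Rminus_0_r, Rabs_R0. lra.
    + intros x Hx. rewrite Rmin_left in Hx by lra. apply H. lra.
Qed.

Lemma is_derive_shift (f f' : R -> R) x y : (forall z, derivable_pt_lim f z (f' z)) ->
  is_derive (fun y => f (x + y)) y (f' (x + y)).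
Proof.
  intros H. replace (f' (x + y)) with (scal 1 (f' (x + y)))
    by (unfold scal; simpl; unfold mult; simpl; ring).
  apply (is_derive_comp (K := R_AbsRing) (V := R_NormedModule) f (fun y => x + y)).
  - apply is_derive_Reals, H.
  - auto_derive; [trivial|ring].
Qed.

Lemma is_derive_reflect (f f' : R -> R) x y : (forall z, derivable_pt_lim f z (f' z)) ->
  is_derive (fun y => f (x - y)) y (- f' (x - y)).
Proof.
  intros H. replace (- f' (x - y)) with (scal (-1) (f' (x - y)))
    by (unfold scal; simpl; unfold mult; simpl; ring).
  apply (is_derive_comp (K := R_AbsRing) (V := R_NormedModule) f (fun y => x - y)).
  - apply is_derive_Reals, H.
  - auto_derive; [trivial|ring].
Qed.

Lemma continuous_shift (h : R -> R) x y : continuity h -> continuous (fun y => h (x + y)) y.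
Proof.
  intros H. apply (continuous_comp (fun y => x + y) h).
  - apply (ex_derive_continuous (K := R_AbsRing) (V := R_NormedModule)). auto_derive. trivial.
  - apply continuity_pt_filterlim, H.
Qed.

Lemma continuous_reflect (h : R -> R) x y : continuity h -> continuous (fun y => - h (x - y)) y.
Proof.
  intros H. apply (continuous_comp (fun y => x - y) (fun z => - h z)).
  - apply (ex_derive_continuous (K := R_AbsRing) (V := R_NormedModule)). auto_derive. trivial.
  - apply continuity_pt_filterlim, continuity_pt_opp, H.
Qed.

Definition u2_remainder (f f' : R -> R) (Y x : R) : R :=
  RInt (gap_weight (fun y => f (x + y)) (fun y => f' (x + y)) (f x)) 0 Y
  + RInt (gap_weight (fun y => f (x - y)) (fun y => - f' (x - y)) (f x)) 0 Y.

(* The paper's [R], set to [0] where [f] vanishes (there [u_2 = 0] anyway). *)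
Definition u2_relative_remainder (f f' : R -> R) (Y x : R) : R :=
  if Rlt_dec 0 (f x) then - u2_remainder f f' Y x / (2 * PI * f x) else 0.

Section U2.

Variables (f f' w : R -> R) (Y Df Mf : R).
Hypothesis f_nonneg : forall x, 0 <= f x.
Hypothesis f_derive : forall x, derivable_pt_lim f x (f' x).
Hypothesis f'_cont : continuity f'.
Hypothesis w_modulus : forall r, 0 < r <= 1 -> modulus_at f' r (w r).
Hypothesis w_dini : improper_int_01 (fun r => w r / r) Df.
Hypothesis f'_sup : sup_norm f' Mf.
Hypothesis Y_ge_1 : 1 <= Y.
Hypothesis f_far : forall x y, 0 < f x -> Y <= y ->
  f (x + y) = 0 /\ f' (x + y) = 0 /\ f (x - y) = 0 /\ f' (x - y) = 0.

Lemma u2_integral_pos x : 0 < f x ->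
  improper_int_R (u2_integrand f x) (- f x + / (2 * PI) * u2_remainder f f' Y x).
Proof.
  intros Hx.
  assert (Hp1 : forall y, Rabs (f' (x + y)) <= Mf) by (intros; apply sup_norm_ge, f'_sup).
  assert (Hp2 : forall y, Rabs (- f' (x - y)) <= Mf)
    by (intros; rewrite Rabs_Ropp; apply sup_norm_ge, f'_sup).
  exists (- f x / 2 + / (2 * PI) * RInt (gap_weight (fun y => f (x + y))
                                                     (fun y => f' (x + y)) (f x)) 0 Y),
         (- f x / 2 + / (2 * PI) * RInt (gap_weight (fun y => f (x - y))
                                                     (fun y => - f' (x - y)) (f x)) 0 Y).
  split; [|split; [|unfold u2_remainder; field; pose proof PI_RGT_0; lra]].
  - apply (improper_int_u2_kernel _ _ (f x) Mf); auto; try lra.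
    + rewrite Rplus_0_r; reflexivity.
    + intros; apply is_derive_shift, f_derive.
    + intros; apply continuous_shift, f'_cont.
    + intros y Hy. destruct (f_far x y Hx Hy) as [-> [-> _]]. split; reflexivity.
  - replace (fun y => u2_integrand f x (- y)) with (u2_kernel (fun y => f (x - y)) (f x))
      by (apply functional_extensionality; intros y;
          unfold u2_kernel, log_ratio, u2_integrand;
          replace ((- y) ^ 2) with (y ^ 2) by ring; reflexivity).
    apply (improper_int_u2_kernel _ _ (f x) Mf); auto; try lra.
    + rewrite Rminus_0_r; reflexivity.
    + intros; apply is_derive_reflect, f_derive.
    + intros; apply continuous_reflect, f'_cont.
    + intros y Hy. destruct (f_far x y Hx Hy) as [_ [_ [-> ->]]]. split; [|ring]; reflexivity.
Qed.

Lemma u2_integral_zero x : f x = 0 -> improper_int_R (u2_integrand f x) 0.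
Proof.
  intros Hx0.
  assert (Z : forall y, 0 < y -> u2_integrand f x y = 0).
  { intros y Hy. unfold u2_integrand. rewrite Hx0, Rminus_0_r, Rplus_0_r.
    rewrite Rdiv_diag, ln_1, Rmult_0_r; [reflexivity|].
    pose proof (pow2_ge_0 (f (x + y))). pose proof (pow_lt y 2 Hy). lra. }
  exists 0, 0. split; [|split; [|ring]]; apply improper_int_pos_0; [exact Z|].
  intros y Hy. unfold u2_integrand. rewrite Hx0, Rminus_0_r, Rplus_0_r.
  rewrite Rdiv_diag, ln_1, Rmult_0_r; [reflexivity|].
  pose proof (pow2_ge_0 (f (x + - y))). assert (0 < (- y) ^ 2)
    by (replace ((- y) ^ 2) with (y ^ 2) by ring; apply pow_lt; lra).
  lra.
Qed.

Lemma u2_integral x :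
  improper_int_R (u2_integrand f x) (- f x * (1 + u2_relative_remainder f f' Y x)).
Proof.
  unfold u2_relative_remainder. destruct (Rlt_dec 0 (f x)) as [Hx|Hx].
  - replace (- f x * (1 + - u2_remainder f f' Y x / (2 * PI * f x)))
      with (- f x + / (2 * PI) * u2_remainder f f' Y x) by (field; pose proof PI_RGT_0; lra).
    exact (u2_integral_pos x Hx).
  - assert (Hx0 : f x = 0) by (pose proof (f_nonneg x); lra).
    rewrite Hx0, Ropp_0, Rmult_0_l. exact (u2_integral_zero x Hx0).
Qed.

Lemma u2_relative_remainder_bound x : Rabs (u2_relative_remainder f f' Y x)
  <= ((4 + 4 * Mf) * Df + 16 * PI * Mf * (1 + Mf) + 4 * Mf * (Y - 1)) / (2 * PI).
Proof.
  assert (HPI := PI_RGT_0).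
  assert (HMf := sup_norm_nonneg f' Mf f'_sup).
  assert (HDf := dini_nonneg f' w Df w_modulus w_dini).
  unfold u2_relative_remainder. destruct (Rlt_dec 0 (f x)) as [Hx|Hx].
  2: { rewrite Rabs_R0. apply Rdiv_le_0_compat; [|lra].
       assert (0 <= Mf * (1 + Mf)) by nra. nra. }
  set (B := (4 + 4 * Mf) * Df + 16 * PI * Mf * (1 + Mf) + 4 * Mf * (Y - 1)).
  assert (Hb : Rabs (u2_remainder f f' Y x) <= f x * B).
  2: { unfold Rdiv. rewrite Rabs_mult, Rabs_Ropp, (Rabs_right (/ (2 * PI * f x)))
         by (apply Rle_ge, Rlt_le, Rinv_0_lt_compat; nra).
       apply (Rmult_le_reg_r (2 * PI * f x)); [nra|].
       replace (Rabs (u2_remainder f f' Y x) * / (2 * PI * f x) * (2 * PI * f x))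
         with (Rabs (u2_remainder f f' Y x)) by (field; nra).
       replace (B * / (2 * PI) * (2 * PI * f x)) with (f x * B) by (field; lra). exact Hb. }
  apply (RInt_gap_weight_sum_bound _ _ _ _ w (f x) (f' x) Mf Df); auto.
  - apply sup_norm_ge, f'_sup.
  - rewrite Rplus_0_r; reflexivity.
  - rewrite Rminus_0_r; reflexivity.
  - intros; apply is_derive_shift, f_derive.
  - intros; apply is_derive_reflect, f_derive.
  - intros; apply continuous_shift, f'_cont.
  - intros; apply continuous_reflect, f'_cont.
  - intros; apply sup_norm_ge, f'_sup.
  - intros; rewrite Rabs_Ropp; apply sup_norm_ge, f'_sup.
  - intros y Hy. destruct (difference_quotients_modulus f f' (w y) x y f_derive ltac:(lra)
                             (w_modulus y Hy)) as [M1 M2].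
    repeat split; auto.
    + apply (modulus_at_ge f' y); [apply w_modulus; exact Hy|].
      replace (x + y - x) with y by ring. rewrite Rabs_right; lra.
    + replace (- f' (x - y) + f' x) with (f' x - f' (x - y)) by ring.
      apply (modulus_at_ge f' y); [apply w_modulus; exact Hy|].
      replace (x - (x - y)) with y by ring. rewrite Rabs_right; lra.
Qed.

End U2.

Lemma exists_nat_gt r : exists n : nat, r < INR n.
Proof.
  destruct (archimed r) as [H _]. destruct (up r) as [|p|p] eqn:E.
  - exists 0%nat. simpl. simpl in H. lra.
  - exists (Pos.to_nat p). rewrite INR_IZR_INZ, positive_nat_Z. exact H.
  - exists 0%nat. simpl. assert (IZR (Z.neg p) < 0) by (apply IZR_lt; lia). lra.
Qed.

Lemma bounded_support_far (K : R -> Prop) m0 M0 (f f' : R -> R) x y :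
  (forall z, K z -> m0 <= z <= M0) -> (forall z, ~ K z -> f z = 0) ->
  (forall z, ~ K z -> f' z = 0) -> 0 < f x -> Rabs (M0 - m0) + 1 <= y ->
  f (x + y) = 0 /\ f' (x + y) = 0 /\ f (x - y) = 0 /\ f' (x - y) = 0.
Proof.
  intros HK Hf Hf' Hx Hy.
  assert (Kx : K x) by (apply NNPP; intros nK; rewrite Hf in Hx by exact nK; lra).
  destruct (HK x Kx). pose proof (Rle_abs (M0 - m0)).
  assert (N1 : ~ K (x + y)) by (intros Kz; destruct (HK _ Kz); lra).
  assert (N2 : ~ K (x - y)) by (intros Kz; destruct (HK _ Kz); lra).
  auto.
Qed.

Lemma le_1_plus_pow x k : 0 <= x -> (1 <= k)%nat -> x <= 1 + x ^ k.
Proof.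
  intros Hx Hk. destruct (Rle_dec x 1).
  - assert (0 <= x ^ k) by (apply pow_le; lra). lra.
  - assert (x ^ 1 <= x ^ k) by (apply Rle_pow; [lra|exact Hk]). simpl in H. lra.
Qed.

Lemma remainder_coefficient_le Mf Df cK Y :
  0 <= Mf -> 0 <= Df -> 0 <= cK -> 1 <= Y -> Mf <= cK * Df ->
  ((4 + 4 * Mf) * Df + 16 * PI * Mf * (1 + Mf) + 4 * Mf * (Y - 1)) / (2 * PI)
  <= (8 + 32 * PI * cK + 4 * (Y - 1) * cK) / (2 * PI) * (Df * (1 + Mf ^ 5)).
Proof.
  intros HM HD HK HY Hle.
  assert (HPI := PI_RGT_0).
  replace ((8 + 32 * PI * cK + 4 * (Y - 1) * cK) / (2 * PI) * (Df * (1 + Mf ^ 5)))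
    with ((8 + 32 * PI * cK + 4 * (Y - 1) * cK) * (Df * (1 + Mf ^ 5)) / (2 * PI))
    by (field; lra).
  apply Rmult_le_compat_r; [apply Rlt_le, Rinv_0_lt_compat; lra|].
  set (t := 1 + Mf ^ 5).
  assert (Ht1 : Mf <= t) by (apply le_1_plus_pow; [lra|lia]).
  assert (Ht2 : 1 <= t) by (unfold t; pose proof (pow_le Mf 5 HM); lra).
  assert (A1 : Df <= Df * t) by nra.
  assert (A2 : Mf * Df <= Df * t) by nra.
  assert (A3 : Mf <= cK * (Df * t)) by nra.
  assert (A4 : Mf * Mf <= cK * (Df * t)).
  { apply Rle_trans with (cK * Df * Mf); [nra|]. assert (0 <= cK * Df) by nra. nra. }
  assert (A5 : Mf * (Y - 1) <= (Y - 1) * cK * (Df * t)) by nra.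
  nra.
Qed.

Lemma dini_weight_le Mf Df cK : 0 <= Mf -> 0 <= Df -> 0 <= cK -> Mf <= cK * Df ->
  Df * (1 + Mf ^ 5) <= (1 + cK ^ 5) * (1 + Df ^ 6).
Proof.
  intros HM HD HK Hle.
  assert (P5 : Mf ^ 5 <= cK ^ 5 * Df ^ 5) by (rewrite <- Rpow_mult_distr; apply pow_incr; lra).
  assert (D6 : Df <= 1 + Df ^ 6) by (apply le_1_plus_pow; [lra|lia]).
  assert (0 <= Df ^ 6) by (apply pow_le; lra).
  assert (0 <= cK ^ 5) by (apply pow_le; lra).
  replace (Df ^ 6) with (Df * Df ^ 5) in * by ring.
  assert (Df * Mf ^ 5 <= Df * (cK ^ 5 * Df ^ 5)) by (apply Rmult_le_compat_l; lra).
  nra.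
Qed.

Lemma relative_remainder_bounds CR cK Df Mf r :
  0 <= CR -> 0 <= cK -> 0 <= Mf -> 0 <= Df -> Mf <= cK * Df ->
  Rabs r <= CR * (Df * (1 + Mf ^ 5)) ->
  Rabs (- (1 + r)) <= (1 + CR * (1 + cK ^ 5)) * (1 + Df ^ 6) /\
  Rabs r <= (1 + CR * (1 + cK ^ 5)) * Df * (1 + Mf ^ 5).
Proof.
  intros HCR HcK HMf HDf HMD Hr.
  assert (HW := dini_weight_le Mf Df cK HMf HDf HcK HMD).
  assert (0 <= Df * (1 + Mf ^ 5)) by (pose proof (pow_le Mf 5 HMf); nra).
  assert (0 <= CR * cK ^ 5) by (apply Rmult_le_pos; [lra|apply pow_le, HcK]).
  assert (0 <= Df ^ 6) by (apply pow_le; lra).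
  split.
  - rewrite Rabs_Ropp. eapply Rle_trans; [apply Rabs_triang|]. rewrite Rabs_R1. nra.
  - rewrite Rmult_assoc. eapply Rle_trans; [apply Hr|]. apply Rmult_le_compat_r; [lra|nra].
Qed.

Theorem mainTheorem7 :
  forall K : R -> Prop, compact K ->
  exists C : R,
  forall (f f' : R -> R),
    continuity f ->
    (forall x, 0 <= f x) ->
    (forall x, ~ K x -> f x = 0) ->
    (forall x, derivable_pt_lim f x (f' x)) ->
    in_Cstar K f' ->
    forall Df Mf, dini_norm f' Df -> sup_norm f' Mf ->
    exists U Rm : R -> R,
      (forall x, improper_int_R (u2_integrand f x) (f x * U x)) /\
      (forall x, f x * U x = - f x * (1 + Rm x)) /\
      (forall x, Rabs (U x) <= C * (1 + Df ^ 6)) /\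
      (forall x, Rabs (Rm x) <= C * Df * (1 + Mf ^ 5)).
Proof.
  intros K HK.
  destruct (compact_P1 K HK) as [m0 [M0 HKb]].
  destruct (exists_nat_gt (2 * (M0 - m0))) as [N HN].
  set (cK := 2 * INR N). set (Y := Rabs (M0 - m0) + 1).
  set (CR := (8 + 32 * PI * cK + 4 * (Y - 1) * cK) / (2 * PI)).
  exists (1 + CR * (1 + cK ^ 5)).
  intros f f' _ Hfpos Hfsupp Hder [_ [Hf'c [Hf'supp _]]] Df Mf [w [Hw Hwint]] Hsup.
  set (Rm := u2_relative_remainder f f' Y).
  exists (fun x => - (1 + Rm x)), Rm.
  assert (HY : 1 <= Y) by (unfold Y; pose proof (Rabs_pos (M0 - m0)); lra).
  assert (HcK : 0 <= cK) by (unfold cK; pose proof (pos_INR N); lra).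
  assert (HCR : 0 <= CR) by (unfold CR; pose proof PI_RGT_0; apply Rdiv_le_0_compat; nra).
  assert (HMf := sup_norm_nonneg f' Mf Hsup). assert (HDf := dini_nonneg f' w Df Hw Hwint).
  assert (HMD := sup_norm_le_dini f' w Df Hw Hwint K m0 M0 N Mf HKb HN Hf'supp Hsup).
  assert (RmB : forall x, Rabs (Rm x) <= CR * (Df * (1 + Mf ^ 5))).
  { intros x. eapply Rle_trans; [apply (u2_relative_remainder_bound f f' w Y Df Mf); auto|].
    apply remainder_coefficient_le; auto. }
  repeat split; intros x; try apply (relative_remainder_bounds CR cK Df Mf); auto.
  - replace (f x * - (1 + Rm x)) with (- f x * (1 + Rm x)) by ring.
    apply (u2_integral f f' Y Mf); auto.
    intros; apply (bounded_support_far K m0 M0); auto.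
  - ring.
Qed.
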